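(* Let $n \ge 1$ (the number of clients in a secure-aggregation shard), $d\ge 1$, $m \ge 2$ be integers, and let $\varepsilon>0$, $\Delta>0$. Set $\alpha = 1/n$ and $\beta = e^{-\varepsilon/\Delta}$. For each input tuple $v=(v_1,\dots,v_n)$ of integer vectors $v_i\in\mathbb{Z}^d$, define the randomized mechanism $$\mathcal{M}(v) = \left(\sum_{i=1}^{n} \big( (v_i + X_i - Y_i) \bmod m\big)\right) \bmod m \;\in\; \mathbb{Z}_m^d,$$ where all $X_i, Y_i\in\mathbb{Z}_{\ge 0}^d$ have mutually independent coordinates, each distributed as Pólya$(\alpha,\beta)$, independent of the input, and ''$\bmod\ m$'' is applied entrywise. Call two input tuples $v, v'$ neighboring if they differ in exactly one index $j$ and $\|v_j - v'_j\|_1 \le \Delta$. Then $\mathcal{M}$ is $\varepsilon$-differentially private: for all neighboring $v,v'$ and every set $S\subseteq \mathbb{Z}_m^d$, $\Pr[\mathcal{M}(v)\in S]\le e^{\varepsilon}\Pr[\mathcal{M}(v')\in S]$.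
   Context: A random variable $X$ is Pólya$(\alpha,\beta)$ with $\alpha>0$, $\beta\in(0,1)$ if $X$ takes values in $\mathbb{Z}_{\ge 0}$ with $P(X=k) = \binom{\alpha+k-1}{\alpha-1}\beta^k(1-\beta)^\alpha$, where the generalized binomial coefficient is defined via Gamma functions, $\binom{\alpha+k-1}{\alpha-1} = \frac{\Gamma(\alpha+k)}{\Gamma(\alpha)\,k!}$. Equivalently, $X$ is obtained by drawing $\lambda\sim\mathrm{Gamma}(\alpha,\beta/(1-\beta))$ (shape $\alpha$, scale $\beta/(1-\beta)$) and then $X\sim\mathrm{Poisson}(\lambda)$. For an integer $a$, $a \bmod m$ denotes the representative in $\{0,\dots,m-1\}$. *)

From HB Require Import structures.
From mathcomp Require Import all_boot all_order all_algebra.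
From mathcomp Require Import all_classical all_reals all_analysis.
Set Implicit Arguments. Unset Strict Implicit. Unset Printing Implicit Defensive.
Import Order.TTheory GRing.Theory Num.Theory.
Local Open Scope ring_scope.

(* Generalized binomial coefficient binom(a+k-1, a-1) = Gamma(a+k)/(Gamma(a) k!),
   written via the identity Gamma(a+k)/Gamma(a) = a(a+1)...(a+k-1). *)
Definition gbinom {R : realType} (a : R) (k : nat) : R :=
  (\prod_(i < k) (a + i%:R)) / (k`!)%:R.

Definition polya_pmf {R : realType} (a b : R) (k : nat) : R :=
  gbinom a k * b ^+ k * powR (1 - b) a.

Definition noise (n d : nat) := (('I_n -> 'I_d -> nat) * ('I_n -> 'I_d -> nat))%type.

Definition noise_pmf {R : realType} (n d : nat) (a b : R) (XY : noise n d) : R :=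
  \prod_(i < n) \prod_(j < d) (polya_pmf a b (XY.1 i j) * polya_pmf a b (XY.2 i j)).

Definition mech (n d : nat) (m : int) (v : 'I_n -> 'I_d -> int) (XY : noise n d)
  : 'I_d -> int :=
  fun j => ((\sum_(i < n) ((v i j + (XY.1 i j)%:Z - (XY.2 i j)%:Z) %% m)%Z) %% m)%Z.

Definition mech_prob {R : realType} (n d : nat) (m : int) (a b : R)
  (v : 'I_n -> 'I_d -> int) (S : set ('I_d -> int)) : \bar R :=
  \esum_(XY in [set XY : noise n d | S (mech m v XY)]) (noise_pmf a b XY)%:E.

Definition neighboring {R : realType} (n d : nat) (Delta : R)
  (v v' : 'I_n -> 'I_d -> int) : Prop :=
  exists j : 'I_n, (forall i, i != j -> v i = v' i) /\ v j <> v' j /\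
    ((\sum_(k < d) `|v j k - v' j k|)%:~R <= Delta).

(* Sums of independent Polya(a, b) variables are Polya with the shapes added
   (a Chu-Vandermonde identity for the generalized binomials), so in every
   coordinate the n client noises of shape 1/n aggregate to X - Y with X, Y
   independent Polya(1, b), i.e. geometric: the aggregate noise is discrete
   Laplace.  Reduction mod m commutes with the sums, so the output only depends
   on the column sums of the input, and since b P(X = t) = P(X = t + 1),
   moving one column sum by +-1 changes the probability of any event by a
   factor at most 1/b.  Neighbouring inputs have column sums at l1-distance at
   most Delta, whence the factor b^-Delta = e^eps. *)

From HB Require Import structures.
From mathcomp Require Import all_boot all_order all_algebra.
From mathcomp Require Import all_classical all_reals all_analysis.
From mathcomp Require Import ring zify.
Set Implicit Arguments. Unset Strict Implicit. Unset Printing Implicit Defensive.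
Import Order.TTheory GRing.Theory Num.Theory.
Local Open Scope ring_scope.
Local Open Scope classical_set_scope.

Section gbinom.
Variable R : realType.
Implicit Types a c : R.

Lemma gbinom0 a : gbinom a 0 = 1.
Proof. by rewrite /gbinom big_ord0 fact0 divr1. Qed.

Lemma gbinomS a t : gbinom a t.+1 * t.+1%:R = gbinom a t * (a + t%:R).
Proof.
rewrite /gbinom big_ord_recr /= factS natrM.
have t1_neq0 : (t.+1%:R : R) != 0 by rewrite pnatr_eq0.
have fact_neq0 : (t`!%:R : R) != 0 by rewrite pnatr_eq0 -lt0n fact_gt0.
by field; apply/andP.
Qed.

Lemma gbinomSE a t : gbinom a t.+1 = gbinom a t * (a + t%:R) / t.+1%:R.
Proof. by rewrite -gbinomS mulfK // pnatr_eq0. Qed.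

Lemma gbinom_ge0 a t : 0 <= a -> 0 <= gbinom a t.
Proof.
move=> a0; elim: t => [|t IH]; first by rewrite gbinom0.
by rewrite gbinomSE divr_ge0 // mulr_ge0 // addr_ge0.
Qed.

Lemma gbinom0S t : gbinom (0 : R) t.+1 = 0.
Proof.
elim: t => [|t IH]; first by rewrite gbinomSE gbinom0 add0r mul1r mul0r.
by rewrite gbinomSE IH !mul0r.
Qed.

Lemma gbinom1 t : gbinom (1 : R) t = 1.
Proof.
elim: t => [|t IH]; first by rewrite gbinom0.
by rewrite gbinomSE IH mul1r -natr1 addrC divff // pnatr_eq0.
Qed.

Lemma gbinom_vandermonde a c s :
  \sum_(k < s.+1) gbinom a k * gbinom c (s - k) = gbinom (a + c) s.
Proof.
pose conv u := \sum_(k < u.+1) gbinom a k * gbinom c (u - k).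
(* Both sides satisfy the recurrence (s + 1) f (s + 1) = (a + c + s) f s. *)
have convS s' : conv s'.+1 * s'.+1%:R = conv s' * (a + c + s'%:R).
  rewrite /conv; set u := s'.+1.
  have -> : (\sum_(k < u.+1) gbinom a k * gbinom c (u - k)) * u%:R =
      \sum_(k < u.+1) (gbinom a k * gbinom c (u - k) * k%:R) +
      \sum_(k < u.+1) (gbinom a k * gbinom c (u - k) * (u - k)%:R).
    rewrite big_distrl -big_split /=; apply: eq_bigr => k _.
    by rewrite -mulrDr -natrD subnKC // -ltnS.
  rewrite big_ord_recl /= mulr0 add0r [X in _ + X]big_ord_recr /= subnn mulr0 addr0.
  rewrite -big_split big_distrl /=; apply: eq_bigr => i _.
  have i_le_s : (i <= s')%N by rewrite -ltnS.
  rewrite /bump leq0n add1n /u subSS mulrAC gbinomS subSn // -mulrA gbinomS natrB //.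
  ring.
elim: s => [|s IH]; first by rewrite big_ord1 !gbinom0 mulr1.
apply: (mulIf (_ : s.+1%:R != 0 :> R)); first by rewrite pnatr_eq0.
by rewrite -/(conv s.+1) convS /conv IH gbinomS.
Qed.

End gbinom.

Section polya.
Variable R : realType.
Implicit Types a b c : R.

Lemma polya_pmf_ge0 a b t : 0 <= a -> 0 <= b -> 0 <= polya_pmf a b t.
Proof.
by move=> a0 b0; rewrite /polya_pmf mulr_ge0 ?powR_ge0 // mulr_ge0 ?exprn_ge0 ?gbinom_ge0.
Qed.

Lemma polya_pmf0 b t : polya_pmf 0 b t = (t == 0)%:R.
Proof.
rewrite /polya_pmf powRr0 mulr1; case: t => [|t].
  by rewrite gbinom0 expr0 mulr1.
by rewrite gbinom0S !mul0r.
Qed.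

Lemma polya_pmf1S b t : polya_pmf 1 b t.+1 = b * polya_pmf 1 b t.
Proof. by rewrite /polya_pmf !gbinom1 exprS; ring. Qed.

Lemma polya_pmf_conv a c b s : b != 1 ->
  \sum_(k < s.+1) polya_pmf a b k * polya_pmf c b (s - k) = polya_pmf (a + c) b s.
Proof.
move=> b_neq1; rewrite /polya_pmf -gbinom_vandermonde !big_distrl /=.
rewrite powRD; last by rewrite subr_eq0 [1 == b]eq_sym b_neq1 implybT.
apply: eq_bigr => k _.
have k_le_s : (k <= s)%N by rewrite -ltnS.
by rewrite -[in b ^+ s](subnKC k_le_s) exprD; ring.
Qed.

End polya.

Section esum_extra.
Variables (R : realType) (T : choiceType).
Local Open Scope ereal_scope.
Implicit Types (a : T -> \bar R) (D : set T).

Lemma esumZl D a (c : R) : (0 <= c)%R -> (forall x, D x -> 0 <= a x) ->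
  \esum_(x in D) (c%:E * a x) = c%:E * \esum_(x in D) a x.
Proof.
move=> c0 a0.
have esumZl_le (c' : R) (a' : T -> \bar R) : (0 <= c')%R -> (forall x, D x -> 0 <= a' x) ->
    \esum_(x in D) (c'%:E * a' x) <= c'%:E * \esum_(x in D) a' x.
  move=> c'0 a'0; apply: ge_ereal_sup => _ [X [finX XD] <-].
  rewrite fsbig_finite // big_seq -ge0_sume_distrr; last first.
    by move=> i; rewrite in_fset_set // inE => /XD/a'0.
  rewrite lee_wpmul2l ?lee_fin // -big_seq -fsbig_finite //.
  by apply: ereal_sup_ubound; exists X.
apply/eqP; rewrite eq_le esumZl_le //=.
have [->|c_neq0] := eqVneq c 0%R.
  by rewrite mul0e esum_ge0 // => x Dx; rewrite mul0e.
have c_gt0 : (0 < c)%R by rewrite lt_def c_neq0.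
rewrite -(@lee_pmul2l _ c^-1%:E) ?lte_fin ?invr_gt0 // muleA -EFinM mulVf // mul1e.
rewrite -[leLHS](@eq_esum _ _ _ (fun x => c^-1%:E * (c%:E * a x))); last first.
  by move=> x _; rewrite muleA -EFinM mulVf // mul1e.
apply: esumZl_le; first by rewrite invr_ge0 ltW.
by move=> x Dx; rewrite mule_ge0 ?lee_fin ?a0.
Qed.

Lemma esum_le_subset D1 D2 a : D1 `<=` D2 -> (forall x, D2 x -> 0 <= a x) ->
  \esum_(x in D1) a x <= \esum_(x in D2) a x.
Proof.
move=> D12 a0; rewrite esum_mkcond [leRHS]esum_mkcond; apply: le_esum => x _.
case: ifPn => [/set_mem/D12/mem_set -> //|_]; case: ifPn => // /set_mem; exact: a0.
Qed.

End esum_extra.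

Lemma esum_II (R : realType) (n : nat) (u : nat -> \bar R) :
  (forall k, 0 <= u k)%E -> \esum_(k in `I_n) u k = (\sum_(k < n) u k)%E.
Proof. by move=> u0; rewrite esum_fset // fsbig_ord. Qed.

Section pmf_expect.
Variables (R : realType) (T : choiceType).
Local Open Scope ereal_scope.
Implicit Types (p : T -> R) (f g : T -> \bar R).

Definition pmf_expect p f : \bar R := \esum_(x in [set: T]) (p x)%:E * f x.

Lemma pmf_expect_ge0 p f : (forall x, 0 <= p x)%R -> (forall x, 0 <= f x) ->
  0 <= pmf_expect p f.
Proof. by move=> p0 f0; apply: esum_ge0 => x _; rewrite mule_ge0 ?lee_fin. Qed.

Lemma le_pmf_expect p f g : (forall x, 0 <= p x)%R -> (forall x, f x <= g x) ->
  pmf_expect p f <= pmf_expect p g.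
Proof. by move=> p0 fg; apply: le_esum => x _; rewrite lee_wpmul2l ?lee_fin. Qed.

Lemma pmf_expectZl p f (c : R) : (0 <= c)%R ->
  (forall x, 0 <= p x)%R -> (forall x, 0 <= f x) ->
  pmf_expect p (fun x => c%:E * f x) = c%:E * pmf_expect p f.
Proof.
move=> c0 p0 f0; rewrite /pmf_expect -esumZl //; last first.
  by move=> x _; rewrite mule_ge0 ?lee_fin.
by apply: eq_esum => x _; rewrite muleCA.
Qed.

End pmf_expect.

Definition fcons (A : Type) (n : nat) (a : A) (x : 'I_n -> A) : 'I_n.+1 -> A :=
  fun i => if unlift ord0 i is Some j then x j else a.

Lemma fcons0 A n a (x : 'I_n -> A) : fcons a x ord0 = a.
Proof. by rewrite /fcons unlift_none. Qed.

Lemma fconsS A n a (x : 'I_n -> A) j : fcons a x (lift ord0 j) = x j.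
Proof. by rewrite /fcons liftK. Qed.

Lemma fcons_bij (A : choiceType) n :
  set_bij ([set: A] `*`` (fun=> [set: 'I_n -> A])) [set: 'I_n.+1 -> A]
    (fun z => fcons z.1 z.2).
Proof.
split => //.
- move=> [a x] [a' x'] _ _ /= eq_fcons; congr (_, _).
    by rewrite -(fcons0 a x) -(fcons0 a' x') eq_fcons.
  by apply: funext => j; rewrite -(fconsS a x) -(fconsS a' x') eq_fcons.
- move=> y _; exists (y ord0, fun j => y (lift ord0 j)) => //=.
  by apply: funext => i; rewrite /fcons; case: unliftP => [j|] ->.
Qed.

Section polya_expect.
Variables (R : realType) (b : R).
Hypotheses (b_ge0 : (0 <= b)%R) (b_neq1 : b != 1%R).
Local Open Scope ereal_scope.

Let polya_ge0 (a : R) t : (0 <= a)%R -> (0 <= polya_pmf a b t)%R.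
Proof. by move=> a0; exact: polya_pmf_ge0. Qed.

Lemma polya_expect_add (a c : R) (g : nat -> \bar R) :
  (0 <= a)%R -> (0 <= c)%R -> (forall t, 0 <= g t) ->
  pmf_expect (polya_pmf a b)
    (fun x => pmf_expect (polya_pmf c b) (fun t => g (x + t)%N)) =
  pmf_expect (polya_pmf (a + c) b) g.
Proof.
move=> a0 c0 g0.
pose F x t := (polya_pmf a b x * polya_pmf c b t)%:E * g (x + t)%N.
have F_ge0 x t : 0 <= F x t by rewrite /F mule_ge0 // lee_fin mulr_ge0 ?polya_ge0.
transitivity (\esum_(z in [set: nat] `*`` (fun=> [set: nat])) F z.1 z.2).
  rewrite -esum_esum //; apply: eq_esum => x _.
  rewrite /pmf_expect -esumZl ?polya_ge0 //; last first.
    by move=> t _; rewrite mule_ge0 ?lee_fin ?polya_ge0.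
  by apply: eq_esum => t _; rewrite /F EFinM muleA.
transitivity (\esum_(s in [set: nat]) \esum_(k in `I_s.+1) F k (s - k)%N).
  rewrite esum_esum //.
  apply: (reindex_esum _ _ (fun z => (z.2, z.1 - z.2)%N) (fun z => F z.1 z.2)).
  split => //.
  - move=> [s k] [s' k'] /set_mem [_ /= ks] /set_mem [_ /= ks'] [kk ss].
    rewrite -kk in ss ks' *.
    by rewrite -(subnKC (ks : (k <= s)%N)) ss subnKC.
  - move=> [x t] _; exists (x + t, x)%N => /=; last by rewrite addKn.
    by split => //=; rewrite ltnS leq_addr.
apply: eq_esum => s _; rewrite /F.
under eq_esum => k ks do rewrite (subnKC (ks : (k <= s)%N)).
rewrite esum_II; last by move=> k; rewrite mule_ge0 // lee_fin mulr_ge0 ?polya_ge0.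
rewrite -ge0_sume_distrl; last by move=> *; rewrite lee_fin mulr_ge0 ?polya_ge0.
by rewrite sumEFin polya_pmf_conv.
Qed.

Lemma polya_expect_sum n (a : R) (g : nat -> \bar R) :
  (0 <= a)%R -> (forall t, 0 <= g t) ->
  pmf_expect (fun x : 'I_n -> nat => \prod_(i < n) polya_pmf a b (x i))%R
    (fun x => g (\sum_(i < n) x i)%N) =
  pmf_expect (polya_pmf (n%:R * a) b) g.
Proof.
move=> a0; elim: n g => [|n IH] g g0.
  rewrite mul0r /pmf_expect (_ : [set: 'I_0 -> nat] = [set fun _ => 0%N]); last first.
    by apply/seteqP; split => x //= _; apply: funext => -[].
  rewrite esum_set1 ?big_ord0 ?mul1e // (esumID [set 0%N]); last first.
    by move=> t _; rewrite mule_ge0 ?lee_fin ?polya_ge0.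
  rewrite setTI esum_set1 ?polya_pmf0 /= ?mul1e // esum1 ?adde0 //.
  by move=> t [_ /eqP t0]; rewrite polya_pmf0 (negPf t0) mul0e.
rewrite -natr1 mulrDl mul1r addrC -polya_expect_add ?mulr_ge0 //.
rewrite /pmf_expect (reindex_esum _ _ _ _ (fcons_bij nat n)).
rewrite -(@esum_esum _ _ _ _ (fun=> [set: 'I_n -> nat]) (fun x0 x =>
  (\prod_(i < n.+1) polya_pmf a b (fcons x0 x i))%:E *
  g (\sum_(i < n.+1) fcons x0 x i)%N)); last first.
  by move=> x0 x _ _; rewrite mule_ge0 // lee_fin prodr_ge0 // => i _; rewrite polya_ge0.
apply: eq_esum => x0 _.
rewrite -/(pmf_expect (polya_pmf (n%:R * a) b) _) -IH; last by move=> t; rewrite g0.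
rewrite -esumZl ?polya_ge0 //; last first.
  by move=> x _; rewrite mule_ge0 // lee_fin prodr_ge0 // => i _; rewrite polya_ge0.
apply: eq_esum => x _.
rewrite big_ord_recl [X in g X]big_ord_recl !fcons0.
under eq_bigr do rewrite fconsS.
under [X in (_ + X)%N]eq_bigr do rewrite fconsS.
by rewrite EFinM muleA.
Qed.

Let polya1_ge0 t : (0 <= polya_pmf 1 b t)%R.
Proof. exact: polya_ge0. Qed.

Lemma polya1_expect_shift (f g : nat -> \bar R) :
  (forall t, 0 <= f t) -> (forall t, 0 <= g t) -> (forall t, f t = g t.+1) ->
  b%:E * pmf_expect (polya_pmf 1 b) f <= pmf_expect (polya_pmf 1 b) g.
Proof.
move=> f0 g0 fg; rewrite -pmf_expectZl // /pmf_expect.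
pose G u := (polya_pmf 1 b u)%:E * g u.
rewrite (eq_esum (b := fun t => G t.+1)); last first.
  by move=> t _; rewrite /G polya_pmf1S EFinM muleCA muleA fg.
rewrite -(esum_image _ S G) //; last by move=> x y _ _ [].
by apply: esum_le_subset => // t _; rewrite /G mule_ge0 ?lee_fin.
Qed.

Definition dlaplace_expect (h : int -> \bar R) : \bar R :=
  pmf_expect (polya_pmf 1 b)
    (fun s => pmf_expect (polya_pmf 1 b) (fun t => h (s%:Z - t%:Z)%R)).

Lemma dlaplace_expect_ge0 h : (forall z, 0 <= h z) -> 0 <= dlaplace_expect h.
Proof. by move=> h0; apply: pmf_expect_ge0 => // s; apply: pmf_expect_ge0. Qed.

Lemma dlaplace_expect_shift1 h : (forall z, 0 <= h z) ->
  b%:E * dlaplace_expect h <= dlaplace_expect (fun z => h (z + 1)%R).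
Proof.
move=> h0; rewrite -pmf_expectZl //; last by move=> s; apply: pmf_expect_ge0.
apply: le_pmf_expect => // s; apply: polya1_expect_shift => // t.
by congr h; lia.
Qed.

Lemma dlaplace_expect_shiftN1 h : (forall z, 0 <= h z) ->
  b%:E * dlaplace_expect h <= dlaplace_expect (fun z => h (z - 1)%R).
Proof.
move=> h0; apply: polya1_expect_shift => [s|s|s]; try exact: pmf_expect_ge0.
by apply: eq_esum => t _; congr (_ * h _); lia.
Qed.

Lemma polya_pair_expect n (h : int -> \bar R) : (0 < n)%N -> (forall z, 0 <= h z) ->
  pmf_expect (fun xy : ('I_n -> nat) * ('I_n -> nat) =>
      \prod_(i < n) (polya_pmf n%:R^-1 b (xy.1 i) * polya_pmf n%:R^-1 b (xy.2 i)))%R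
    (fun xy => h ((\sum_(i < n) xy.1 i)%N%:Z - (\sum_(i < n) xy.2 i)%N%:Z)%R) =
  dlaplace_expect h.
Proof.
move=> n_gt0 h0; set a := (n%:R^-1)%R.
have a0 : (0 <= a)%R by rewrite invr_ge0.
have pa x : (0 <= \prod_(i < n) polya_pmf a b (x i))%R.
  by apply: prodr_ge0 => i _; apply: polya_ge0.
have sum_expect (g : nat -> \bar R) : (forall t, 0 <= g t) ->
    pmf_expect (fun x : 'I_n -> nat => \prod_(i < n) polya_pmf a b (x i))%R
      (fun x => g (\sum_(i < n) x i)%N) = pmf_expect (polya_pmf 1 b) g.
  by move=> g0; rewrite polya_expect_sum // mulfV // pnatr_eq0 -lt0n.
rewrite /dlaplace_expect -sum_expect; last by move=> s; apply: pmf_expect_ge0.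
rewrite /pmf_expect (_ : [set: _] = [set: 'I_n -> nat] `*`` (fun=> [set: 'I_n -> nat]));
  last by apply/seteqP; split.
rewrite -(@esum_esum _ _ _ _ _ (fun x y =>
  (\prod_(i < n) (polya_pmf a b (x i) * polya_pmf a b (y i)))%:E
    * h ((\sum_(i < n) x i)%N%:Z - (\sum_(i < n) y i)%N%:Z)%R)); last first.
  by move=> x y _ _; rewrite mule_ge0 // lee_fin big_split mulr_ge0.
apply: eq_esum => x _.
rewrite -/(pmf_expect (polya_pmf 1 b) _) -sum_expect // /pmf_expect -esumZl //; last first.
  by move=> y _; rewrite mule_ge0 // lee_fin.
by apply: eq_esum => y _; rewrite big_split EFinM muleA.
Qed.

End polya_expect.

Section noise_column.
Variables (n d : nat) (k : 'I_d).

Definition setcol (XY : noise n d) (x y : 'I_n -> nat) : noise n d :=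
  (fun i j => if j == k then x i else XY.1 i j,
   fun i j => if j == k then y i else XY.2 i j).

Lemma setcol_setcol XY x y x' y' : setcol (setcol XY x y) x' y' = setcol XY x' y'.
Proof.
by congr (_, _); apply: funext => i; apply: funext => j; rewrite /setcol /=; case: eqP.
Qed.

Lemma setcol_id XY : setcol XY (fun i => XY.1 i k) (fun i => XY.2 i k) = XY.
Proof.
by case: XY => X Y; congr (_, _); apply: funext => i; apply: funext => j;
  rewrite /setcol /=; case: eqP => [->|].
Qed.

Definition zero_col : set (noise n d) :=
  [set XY | setcol XY (fun=> 0%N) (fun=> 0%N) = XY].

Lemma setcol_bij :
  set_bij (zero_col `*`` (fun=> [set: ('I_n -> nat) * ('I_n -> nat)])) [set: noise n d]
    (fun z => setcol z.1 z.2.1 z.2.2).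
Proof.
split => //.
- move=> [XY [x y]] [XY' [x' y']] /set_mem [/= XY0 _] /set_mem [/= XY'0 _] /= eq_set.
  have col1 i : x i = x' i.
    by have := congr1 (fun Z => Z.1 i k) eq_set; rewrite /= eqxx.
  have col2 i : y i = y' i.
    by have := congr1 (fun Z => Z.2 i k) eq_set; rewrite /= eqxx.
  rewrite -XY0 -XY'0 -(setcol_setcol XY x y) -(setcol_setcol XY' x' y') eq_set.
  by rewrite (funext col1) (funext col2).
- move=> XY _.
  exists (setcol XY (fun=> 0%N) (fun=> 0%N), (fun i => XY.1 i k, fun i => XY.2 i k)).
    by split => //; rewrite /zero_col /= setcol_setcol.
  by rewrite /= setcol_setcol setcol_id.
Qed.

End noise_column.

Section noisy_expect.
Variables (R : realType) (n d : nat) (b : R).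
Hypotheses (b_gt0 : (0 < b)%R) (b_lt1 : (b < 1)%R) (n_gt0 : (0 < n)%N).
Local Open Scope ereal_scope.

Let a : R := n%:R^-1.
Let a_ge0 : (0 <= a)%R. Proof. by rewrite invr_ge0. Qed.
Let b_neq1 : b != 1%R. Proof. by rewrite lt_eqF. Qed.
Let polya_ge0 t : (0 <= polya_pmf a b t)%R.
Proof. by rewrite polya_pmf_ge0 // ltW. Qed.

Definition noise_sum (XY : noise n d) (j : 'I_d) : int :=
  ((\sum_(i < n) XY.1 i j)%N%:Z - (\sum_(i < n) XY.2 i j)%N%:Z)%R.

Definition noisy_expect (W : 'I_d -> int) (H : ('I_d -> int) -> \bar R) : \bar R :=
  pmf_expect (noise_pmf a b) (fun XY => H (fun j => W j + noise_sum XY j)%R).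

Definition noise_pmf_off (k : 'I_d) (XY : noise n d) : R :=
  \prod_(i < n) \prod_(j < d | j != k)
    (polya_pmf a b (XY.1 i j) * polya_pmf a b (XY.2 i j)).

Lemma noise_pmf_ge0 (XY : noise n d) : (0 <= noise_pmf a b XY)%R.
Proof. by apply: prodr_ge0 => i _; apply: prodr_ge0 => j _; rewrite mulr_ge0. Qed.

Lemma noise_pmf_off_ge0 k (XY : noise n d) : (0 <= noise_pmf_off k XY)%R.
Proof. by apply: prodr_ge0 => i _; apply: prodr_ge0 => j _; rewrite mulr_ge0. Qed.

Lemma noise_pmf_setcol k (XY : noise n d) x y : noise_pmf a b (setcol k XY x y) =
  (\prod_(i < n) (polya_pmf a b (x i) * polya_pmf a b (y i)) * noise_pmf_off k XY)%R.
Proof.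
rewrite /noise_pmf /noise_pmf_off -big_split /=; apply: eq_bigr => i _.
rewrite (bigD1 k) //= !eqxx; congr (_ * _)%R; apply: eq_bigr => j /negPf -> //.
Qed.

Lemma noise_sum_setcol k XY x y j : noise_sum (setcol k XY x y) j =
  if j == k then ((\sum_(i < n) x i)%N%:Z - (\sum_(i < n) y i)%N%:Z)%R
  else noise_sum XY j.
Proof. by rewrite /noise_sum /setcol /=; case: eqP. Qed.

(* Sum out column k of the noise first: it contributes a discrete Laplace
   shift to coordinate k only. *)
Lemma noisy_expect_col k W H : (forall z, 0 <= H z) ->
  noisy_expect W H = \esum_(XY in zero_col k) dlaplace_expect b (fun t =>
    (noise_pmf_off k XY)%:E *
    H (fun j => if j == k then W k + t else W j + noise_sum XY j)%R).
Proof.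
move=> H0; rewrite /noisy_expect /pmf_expect (reindex_esum _ _ _ _ (setcol_bij n k)).
rewrite -(@esum_esum _ _ _ _ _ (fun XY xy =>
  (noise_pmf a b (setcol k XY xy.1 xy.2))%:E *
  H (fun j => W j + noise_sum (setcol k XY xy.1 xy.2) j)%R)); last first.
  by move=> XY xy _ _; rewrite mule_ge0 // lee_fin noise_pmf_ge0.
apply: eq_esum => XY _.
rewrite -(@polya_pair_expect _ _ (ltW b_gt0) b_neq1 n) //; last first.
  by move=> z; rewrite mule_ge0 // lee_fin noise_pmf_off_ge0.
apply: eq_esum => xy _.
rewrite noise_pmf_setcol EFinM -muleA; congr (_ * (_ * H _)).
by apply: funext => j; rewrite noise_sum_setcol; case: eqP => [->|].
Qed.

Lemma noisy_expect_ge0 W H : (forall z, 0 <= H z) -> 0 <= noisy_expect W H.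
Proof. by move=> H0; apply: pmf_expect_ge0 => // XY; apply: noise_pmf_ge0. Qed.

Lemma noisy_expect_shift k W H (s : int) : (s = 1 \/ s = -1)%R ->
  (forall z, 0 <= H z) ->
  b%:E * noisy_expect W H <= noisy_expect (fun j => if j == k then W k + s else W j)%R H.
Proof.
move=> s_unit H0.
have F0 XY z : 0 <= (noise_pmf_off k XY)%:E *
    H (fun j => if j == k then W k + z else W j + noise_sum XY j)%R.
  by rewrite mule_ge0 // lee_fin noise_pmf_off_ge0.
rewrite !(noisy_expect_col k) // -esumZl; first last.
- by move=> XY _; apply: dlaplace_expect_ge0 => //; apply: ltW.
- exact: ltW.
apply: le_esum => XY _.
have shift_le : forall h, (forall z, 0 <= h z) ->
    b%:E * dlaplace_expect b h <= dlaplace_expect b (fun z => h (z + s)%R).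
  move=> h h0; have b_ge0 := ltW b_gt0.
  by case: s_unit => ->; [apply: dlaplace_expect_shift1|apply: dlaplace_expect_shiftN1].
apply: (le_trans (shift_le _ (F0 XY))); rewrite eqxx.
rewrite le_eqVlt; apply/predU1P; left; congr dlaplace_expect.
by apply/funext => t; congr (_ * H _); apply/funext => j; case: eqP => // _; lia.
Qed.

Lemma noisy_expect_dist W W' H : (forall z, 0 <= H z) ->
  (b ^+ (\sum_(j < d) `|W j - W' j|)%N)%:E * noisy_expect W H <= noisy_expect W' H.
Proof.
move=> H0; have [L dist_WW'] : exists L, (\sum_(j < d) `|W j - W' j|)%N = L by eexists.
rewrite dist_WW'; elim: L W dist_WW' => [|L IH] W dist_WW'.
  suff -> : W = W' by rewrite expr0 mul1e.
  apply: funext => j; move: dist_WW'; rewrite (bigD1 j) //= => /eqP.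
  by rewrite addn_eq0 => /andP[/eqP + _]; lia.
have [k W_neq] : exists k, W k != W' k.
  apply/existsP; apply: contraT; rewrite negb_exists => /forallP W_eq.
  suff : (\sum_(j < d) `|W j - W' j|)%N = 0%N by rewrite dist_WW'.
  by rewrite big1 // => j _; have := W_eq j; rewrite negbK => /eqP ->; rewrite subrr.
pose s : int := (if W k < W' k then 1 else -1)%R.
pose W1 j := if j == k then (W k + s)%R else W j.
have dist_W1W' : (\sum_(j < d) `|W1 j - W' j|)%N = L.
  rewrite (bigD1 k) //= /W1 eqxx; under eq_bigr => j /negPf jk do rewrite jk.
  move: dist_WW'; rewrite (bigD1 k) //=.
  by move: W_neq; rewrite /s; case: ifP => W_lt; lia.
apply: le_trans (IH W1 dist_W1W'); rewrite exprSr EFinM -muleA.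
apply: lee_wpmul2l; first by rewrite lee_fin exprn_ge0 // ltW.
by apply: noisy_expect_shift => //; rewrite /s; case: ifP; [left|right].
Qed.

End noisy_expect.

Lemma modz_sum (k : nat) (m : int) (f : 'I_k -> int) :
  ((\sum_(i < k) (f i %% m)%Z) %% m)%Z = ((\sum_(i < k) f i) %% m)%Z.
Proof.
elim: k f => [|k IH] f; first by rewrite !big_ord0.
by rewrite !big_ord_recr /= -modzDml IH modzDm.
Qed.

Lemma mechE n d m (v : 'I_n -> 'I_d -> int) (XY : noise n d) :
  mech m v XY = fun j => ((\sum_(i < n) v i j + noise_sum XY j) %% m)%Z.
Proof.
apply: funext => j; rewrite /mech modz_sum /noise_sum.
by rewrite !(big_morph Posz PoszD (erefl : Posz 0 = 0)) !big_split /= sumrN addrA.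
Qed.

Lemma mech_prob_noisy_expect (R : realType) n d m (b : R)
    (v : 'I_n -> 'I_d -> int) (S : set ('I_d -> int)) :
  mech_prob m n%:R^-1 b v S =
  noisy_expect n b (fun j => \sum_(i < n) v i j)
    (fun z => if (fun j => z j %% m)%Z \in S then 1 else 0)%E.
Proof.
rewrite /mech_prob /noisy_expect /pmf_expect esum_mkcond; apply: eq_esum => XY _.
have -> : (XY \in [set XY | S (mech m v XY)]) = (mech m v XY \in S).
  by apply/idP/idP => /set_mem /mem_set.
by rewrite mechE; case: ifP; rewrite ?mule1 ?mule0.
Qed.

Lemma neighboring_sum_dist (R : realType) n d (Delta : R) (v v' : 'I_n -> 'I_d -> int) :
  neighboring Delta v v' ->
  ((\sum_(k < d) `|(\sum_(i < n) v i k - \sum_(i < n) v' i k)%R|)%N)%:R <= Delta.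
Proof.
move=> [j [v_eq [_ dist_le]]]; apply: le_trans dist_le.
have col_diff k : \sum_(i < n) v i k - \sum_(i < n) v' i k = v j k - v' j k.
  rewrite -sumrB (bigD1 j) //= big1 ?addr0 // => i ij.
  by rewrite v_eq // subrr.
rewrite natr_sum rmorph_sum le_eqVlt; apply/predU1P; left.
by apply: eq_bigr => k _; rewrite col_diff pmulrn abszE.
Qed.

Theorem mainTheorem1 (R : realType) (n d : nat) (m : int) (eps Delta : R) :
  (1 <= n)%N -> (1 <= d)%N -> 2 <= m -> 0 < eps -> 0 < Delta ->
  forall (v v' : 'I_n -> 'I_d -> int), neighboring Delta v v' ->
  forall S : set ('I_d -> int),
    (mech_prob m (n%:R^-1) (expR (- (eps / Delta))) v S <=
     (expR eps)%:E * mech_prob m (n%:R^-1) (expR (- (eps / Delta))) v' S)%E.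
Proof.
move=> n_gt0 _ _ eps_gt0 Delta_gt0 v v' nb_vv' S.
set b := expR (- (eps / Delta)).
have b_gt0 : 0 < b by apply: expR_gt0.
have b_lt1 : b < 1 by rewrite expR_lt1 oppr_lt0 divr_gt0.
rewrite !mech_prob_noisy_expect.
set W := fun j => \sum_(i < n) v i j; set W' := fun j => \sum_(i < n) v' i j.
set H := fun z : 'I_d -> int => _.
have H0 z : (0 <= H z)%E by rewrite /H; case: ifP.
set L := (\sum_(k < d) `|(W k - W' k)%R|)%N.
have L_le : L%:R <= Delta by apply: neighboring_sum_dist nb_vv'.
apply: (@le_trans _ _ ((b ^+ L)^-1%:E * noisy_expect n b W' H)%E).
  by rewrite lee_pdivlMl ?exprn_gt0 // noisy_expect_dist.
apply: lee_wpmul2r; first exact: noisy_expect_ge0.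
rewrite lee_fin -exprVn /b expRN invrK -expRM_natl ler_expR.
by rewrite mulrA ler_pdivrMr // mulrC ler_pM2l.
Qed.
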